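(* For $f : X \to \mathbb{R}$, the following are equivalent: Player II has a winning strategy in $\Gamma'(f)$; Player II has winning strategies in both $\Gamma(f)$ and $\Gamma(-f)$; $f$ is of Baire class 1.
   Context: Let $A$ be a non-empty countable set and $T$ a pruned tree on $A$ (a set of finite sequences of elements of $A$, closed under initial segments, in which every sequence has a proper extension in $T$). Let $X$ be the set of infinite branches of $T$, with the topology generated by the cylinder sets $O(s) = \{x \in X : s \text{ is an initial segment of } x\}$, $s \in T$. Baire class 1 means a pointwise limit of continuous functions. The game $\Gamma(g)$ for $g : X \to \mathbb{R}$: Player I and Player II alternate, Player I moving first; Player I plays $x_0, x_1, \dots \in A$ subject to $(x_0,\dots,x_t) \in T$ for all $t$, and after each move $x_t$ Player II plays a real $v_t$; Player II wins iff $g(x_0,x_1,\dots) = \limsup_t v_t$. The game $\Gamma'(f)$ is the same except that Player II's moves are pairs of reals $(v_t, w_t)$, and Player II wins iff $f(x_0,x_1,\dots) = \limsup_t v_t = \liminf_t w_t$; otherwise Player I wins. *)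

From Stdlib Require Import Reals List.
From Coquelicot Require Import Coquelicot.
Import ListNotations.
Open Scope R_scope.

Definition countable_type (A : Type) : Prop :=
  exists e : A -> nat, forall a b, e a = e b -> a = b.

Definition closed_under_initial_segments {A : Type} (T : list A -> Prop) : Prop :=
  forall s t : list A, T (s ++ t) -> T s.

Definition pruned {A : Type} (T : list A -> Prop) : Prop :=
  forall s, T s -> exists t, t <> [] /\ T (s ++ t).

Definition pruned_tree {A : Type} (T : list A -> Prop) : Prop :=
  closed_under_initial_segments T /\ pruned T.

Definition prefix {A : Type} (x : nat -> A) (n : nat) : list A :=
  map x (seq 0 n).

Definition branches {A : Type} (T : list A -> Prop) : Type :=
  { x : nat -> A | forall n, T (prefix x n) }.

Definition is_initial_segment {A : Type} (s : list A) (x : nat -> A) : Prop :=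
  prefix x (length s) = s.

Definition cylinder {A : Type} {T : list A -> Prop} (s : list A) : branches T -> Prop :=
  fun x => is_initial_segment s (proj1_sig x).

(* Open sets of the topology generated by the cylinders O(s), s in T:
   unions of cylinders. *)
Definition X_open {A : Type} {T : list A -> Prop} (U : branches T -> Prop) : Prop :=
  forall x, U x -> exists s, T s /\ cylinder s x /\ (forall y, cylinder s y -> U y).

Definition X_continuous {A : Type} {T : list A -> Prop} (g : branches T -> R) : Prop :=
  forall V : R -> Prop, open_set V -> X_open (fun x => V (g x)).

Definition baire_class_1 {A : Type} {T : list A -> Prop} (f : branches T -> R) : Prop :=
  exists g : nat -> branches T -> R,
    (forall n, X_continuous (g n)) /\
    (forall x, is_lim_seq (fun n => g n x) (f x)).

(* Strategies of Player II: after Player I has played (x_0,...,x_t), Player II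
   answers sigma [x_0;...;x_t].  (Player II's own earlier moves are determined by
   sigma and Player I's moves, so this is no loss of generality.) *)

Definition II_wins_Gamma {A : Type} {T : list A -> Prop} (g : branches T -> R)
  (sigma : list A -> R) : Prop :=
  forall x : branches T,
    is_LimSup_seq (fun t => sigma (prefix (proj1_sig x) (S t))) (Finite (g x)).

Definition II_has_ws_Gamma {A : Type} {T : list A -> Prop} (g : branches T -> R) : Prop :=
  exists sigma : list A -> R, II_wins_Gamma g sigma.

Definition II_wins_Gamma' {A : Type} {T : list A -> Prop} (f : branches T -> R)
  (sigma : list A -> R * R) : Prop :=
  forall x : branches T,
    is_LimSup_seq (fun t => fst (sigma (prefix (proj1_sig x) (S t)))) (Finite (f x)) /\
    is_LimInf_seq (fun t => snd (sigma (prefix (proj1_sig x) (S t)))) (Finite (f x)).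

Definition II_has_ws_Gamma' {A : Type} {T : list A -> Prop} (f : branches T -> R) : Prop :=
  exists sigma : list A -> R * R, II_wins_Gamma' f sigma.

(* (1) Gamma'(f) is the product of Gamma(f) and Gamma(-f): the second coordinate
       w_t of II wins "liminf w_t = f(x)" exactly when -w_t wins Gamma(-f), since
       liminf w = - limsup (-w).
   (2) Strategies for Gamma(f) and Gamma(-f) give continuous approximants.  Along
       a branch x let v, z be II's replies in the two games, so limsup v = f(x)
       and limsup z = -f(x).  For each n take the least d such that the maxima
       of v and z over the window [n, n+d] satisfy max v + max z >= -1/(n+1);
       g_n(x) := max of v over that window.  Then g_n(x) depends only on a finite
       prefix of x (hence is continuous), and g_n(x) -> f(x).
   (3) Conversely, if g_k -> f pointwise with g_k continuous, II answers a
       position s with g_m(y) for some branch y through s, where m grows with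
       the number of g_k which already oscillate by at most 1/(k+1) on O(s);
       continuity makes m unbounded along each branch, so the replies tend to f. *)

From Stdlib Require Import Reals List Lra Lia ClassicalEpsilon.
From Coquelicot Require Import Coquelicot.
Open Scope R_scope.

Lemma prefix_length {A : Type} (x : nat -> A) (k : nat) : length (prefix x k) = k.
Proof. unfold prefix. now rewrite length_map, length_seq. Qed.

Lemma prefix_eq_at {A : Type} (x y : nat -> A) (K i : nat) :
  prefix x K = prefix y K -> (i < K)%nat -> x i = y i.
Proof.
  intros H Hi. assert (E := f_equal (fun l => nth_error l i) H). simpl in E.
  unfold prefix in E. rewrite !nth_error_map, nth_error_seq in E.
  destruct (Nat.ltb_spec i K); [|lia]. simpl in E. now inversion E.
Qed.

Lemma prefix_ext {A : Type} (x y : nat -> A) (k : nat) :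
  (forall i, (i < k)%nat -> x i = y i) -> prefix x k = prefix y k.
Proof.
  intros H. unfold prefix. apply map_ext_in. intros a Ha.
  apply in_seq in Ha. apply H; lia.
Qed.

Lemma prefix_shorten {A : Type} (x y : nat -> A) (k K : nat) :
  prefix x K = prefix y K -> (k <= K)%nat -> prefix x k = prefix y k.
Proof.
  intros H Hk. apply prefix_ext. intros i Hi. apply (prefix_eq_at _ _ K); auto; lia.
Qed.

Lemma cylinder_prefix {A : Type} {T : list A -> Prop} (x y : branches T) (t : nat) :
  cylinder (prefix (proj1_sig x) t) y <-> prefix (proj1_sig y) t = prefix (proj1_sig x) t.
Proof. unfold cylinder, is_initial_segment. now rewrite prefix_length. Qed.

Lemma locally_determined_continuous {A : Type} {T : list A -> Prop} (g : branches T -> R) :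
  (forall x, exists t, forall y,
     prefix (proj1_sig y) t = prefix (proj1_sig x) t -> g y = g x) ->
  X_continuous g.
Proof.
  intros Hloc V _ x Vx. destruct (Hloc x) as [t Ht].
  exists (prefix (proj1_sig x) t). split; [apply (proj2_sig x)|]. split.
  - now apply cylinder_prefix.
  - intros y Hy. rewrite Ht; [exact Vx | now apply cylinder_prefix].
Qed.

Lemma continuous_near {A : Type} {T : list A -> Prop} (g : branches T -> R) :
  X_continuous g -> forall (x : branches T) (eps : posreal), exists t, forall y,
    prefix (proj1_sig y) t = prefix (proj1_sig x) t -> Rabs (g y - g x) < eps.
Proof.
  intros Hc x eps. destruct (Hc _ (disc_P1 (g x) eps) x) as [s [_ [Hsx Hs]]].
  { unfold disc. rewrite Rminus_diag, Rabs_R0. apply cond_pos. }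
  exists (length s). intros y Hy. apply (Hs y).
  unfold cylinder, is_initial_segment in *. now rewrite Hy.
Qed.

Lemma inv_succ_eventually_lt (eps : R) :
  0 < eps -> exists N, forall n, (N <= n)%nat -> / INR (S n) < eps.
Proof.
  intros He. destruct (archimed_cor1 eps He) as [N [HN HN0]]. exists N. intros n Hn.
  eapply Rle_lt_trans; [|apply HN]. apply Rinv_le_contravar.
  - apply lt_0_INR; lia.
  - apply le_INR; lia.
Qed.

Lemma least_witness (P : nat -> Prop) :
  (exists n, P n) -> {m | P m /\ forall k, P k -> (m <= k)%nat}.
Proof.
  intros H. apply constructive_indefinite_description.
  destruct (Wf_nat.dec_inh_nat_subset_has_unique_least_element P
              (fun n => classic (P n)) H) as [m [[Hm Hl] _]].
  now exists m.
Qed.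

Lemma least_witness_unique (P Q : nat -> Prop) (m m' : nat) :
  P m -> (forall k, P k -> (m <= k)%nat) ->
  Q m' -> (forall k, Q k -> (m' <= k)%nat) ->
  (forall d, (d <= m)%nat -> (P d <-> Q d)) -> m = m'.
Proof.
  intros Pm Pmin Qm Qmin PQ.
  assert (Hle : (m' <= m)%nat) by (apply Qmin, PQ; auto).
  assert (m <= m')%nat by (apply Pmin, PQ; auto). lia.
Qed.

Fixpoint largest_below (P : nat -> Prop) (L : nat) : nat :=
  match L with
  | O => O
  | S L' => if excluded_middle_informative (P L) then L else largest_below P L'
  end.

Lemma largest_below_spec (P : nat -> Prop) (L : nat) :
  P O -> P (largest_below P L).
Proof.
  intros H0. induction L; simpl; auto.
  destruct excluded_middle_informative; auto.
Qed.

Lemma largest_below_ge (P : nat -> Prop) (L n : nat) :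
  (n <= L)%nat -> P n -> (n <= largest_below P L)%nat.
Proof.
  induction L; intros Hn Pn; simpl; [lia|].
  destruct excluded_middle_informative as [H|H]; [lia|].
  destruct (Nat.eq_dec n (S L)) as [->|]; [contradiction|]. apply IHL; auto; lia.
Qed.

Fixpoint window_max (u : nat -> R) (n d : nat) : R :=
  match d with
  | O => u n
  | S d' => Rmax (window_max u n d') (u (n + S d')%nat)
  end.

Lemma window_max_ge (u : nat -> R) (n d j : nat) :
  (j <= d)%nat -> u (n + j)%nat <= window_max u n d.
Proof.
  induction d; intros Hj; simpl.
  - replace j with 0%nat by lia. rewrite Nat.add_0_r. lra.
  - destruct (Nat.eq_dec j (S d)) as [->|].
    + apply Rmax_r.
    + eapply Rle_trans; [apply IHd; lia | apply Rmax_l].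
Qed.

Lemma window_max_lt (u : nat -> R) (n d : nat) (c : R) :
  (forall j, (j <= d)%nat -> u (n + j)%nat < c) -> window_max u n d < c.
Proof.
  induction d; intros H; simpl.
  - specialize (H 0%nat). rewrite Nat.add_0_r in H. apply H; lia.
  - apply Rmax_lub_lt; [apply IHd; intros; apply H | apply H]; lia.
Qed.

Lemma window_max_ext (u u' : nat -> R) (n d : nat) :
  (forall j, (j <= d)%nat -> u (n + j)%nat = u' (n + j)%nat) ->
  window_max u n d = window_max u' n d.
Proof.
  induction d; intros H; simpl.
  - specialize (H 0%nat). rewrite Nat.add_0_r in H. apply H; lia.
  - rewrite IHd by (intros; apply H; lia). now rewrite H by lia.
Qed.

Definition balanced (u w : nat -> R) (n d : nat) : Prop :=
  0 <= window_max u n d + window_max w n d + / INR (S n).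

Lemma balanced_exists (u w : nat -> R) (l : R) (n : nat) :
  is_LimSup_seq u (Finite l) -> is_LimSup_seq w (Finite (- l)) ->
  exists d, balanced u w n d.
Proof.
  intros Hu Hw. set (e := / INR (S n) / 2).
  assert (He : 0 < e).
  { apply Rdiv_lt_0_compat; [apply Rinv_0_lt_compat, lt_0_INR; lia | lra]. }
  destruct (proj1 (Hu (mkposreal _ He)) n) as [k [Hk Huk]].
  destruct (proj1 (Hw (mkposreal _ He)) n) as [k' [Hk' Hwk']]. simpl pos in Huk, Hwk'.
  exists (Nat.max k k' - n)%nat. unfold balanced.
  pose proof (window_max_ge u n (Nat.max k k' - n) (k - n) ltac:(lia)) as Mu.
  pose proof (window_max_ge w n (Nat.max k k' - n) (k' - n) ltac:(lia)) as Mw.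
  replace (n + (k - n))%nat with k in Mu by lia.
  replace (n + (k' - n))%nat with k' in Mw by lia.
  unfold e in *. lra.
Qed.

Lemma balanced_window_max_lim (u w : nat -> R) (l : R) (d : nat -> nat) :
  is_LimSup_seq u (Finite l) -> is_LimSup_seq w (Finite (- l)) ->
  (forall n, balanced u w n (d n)) ->
  is_lim_seq (fun n => window_max u n (d n)) l.
Proof.
  intros Hu Hw Hbal. apply is_lim_seq_spec. intros eps.
  assert (He2 : 0 < eps / 2) by (destruct eps; simpl; lra).
  destruct (proj2 (Hu eps)) as [N1 HN1].
  destruct (proj2 (Hw (mkposreal _ He2))) as [N2 HN2]. simpl in HN2.
  destruct (inv_succ_eventually_lt _ He2) as [N3 HN3].
  exists (N1 + N2 + N3)%nat. intros n Hn.
  assert (Upper : window_max u n (d n) < l + eps)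
    by (apply window_max_lt; intros j _; apply HN1; lia).
  assert (Wupper : window_max w n (d n) < - l + eps / 2)
    by (apply window_max_lt; intros j _; apply HN2; lia).
  specialize (HN3 n ltac:(lia)). specialize (Hbal n). unfold balanced in Hbal.
  apply Rabs_def1; lra.
Qed.

Lemma gamma'_iff_gamma_pair {A : Type} {T : list A -> Prop} (f : branches T -> R) :
  II_has_ws_Gamma' f <-> (II_has_ws_Gamma f /\ II_has_ws_Gamma (fun x => - f x)).
Proof.
  split.
  - intros [sigma Hs]. split.
    + exists (fun s => fst (sigma s)). intros x. apply (Hs x).
    + exists (fun s => - snd (sigma s)). intros x.
      apply (is_LimSup_opp_LimInf_seq _ (Finite (f x))). apply (Hs x).
  - intros [[sp Hp] [sm Hm]]. exists (fun s => (sp s, - sm s)). intros x. split.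
    + apply Hp.
    + simpl. apply (is_LimSup_opp_LimInf_seq _ (Finite (f x))).
      eapply is_LimSup_seq_ext; [|apply (Hm x)]. intros n. simpl. ring.
Qed.

Section StrategiesToBaire.

Variables (A : Type) (T : list A -> Prop) (f : branches T -> R) (sp sm : list A -> R).
Hypotheses (Hp : II_wins_Gamma f sp) (Hm : II_wins_Gamma (fun x => - f x) sm).

Definition replies (sigma : list A -> R) (x : branches T) (t : nat) : R :=
  sigma (prefix (proj1_sig x) (S t)).

Lemma replies_local (sigma : list A -> R) (x y : branches T) (K t : nat) :
  prefix (proj1_sig y) K = prefix (proj1_sig x) K -> (t < K)%nat ->
  replies sigma y t = replies sigma x t.
Proof. intros H Ht. unfold replies. f_equal. apply (prefix_shorten _ _ _ K); auto; lia. Qed.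

Definition stop_time (n : nat) (x : branches T) : nat :=
  proj1_sig (least_witness _ (balanced_exists (replies sp x) (replies sm x) (f x) n
                                 (Hp x) (Hm x))).

Lemma stop_time_spec (n : nat) (x : branches T) :
  balanced (replies sp x) (replies sm x) n (stop_time n x) /\
  forall d, balanced (replies sp x) (replies sm x) n d -> (stop_time n x <= d)%nat.
Proof. unfold stop_time. now destruct least_witness. Qed.

Definition approximant (n : nat) (x : branches T) : R :=
  window_max (replies sp x) n (stop_time n x).

(* g_n(y) = g_n(x) once y agrees with x on the window defining g_n(x): the
   stopping times then coincide by least_witness_unique. *)
Lemma approximant_local (n : nat) (x y : branches T) :
  prefix (proj1_sig y) (S (n + stop_time n x)) =
  prefix (proj1_sig x) (S (n + stop_time n x)) ->
  approximant n y = approximant n x.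
Proof.
  intros Hxy.
  assert (Same : forall sigma d, (d <= stop_time n x)%nat ->
            window_max (replies sigma y) n d = window_max (replies sigma x) n d).
  { intros sigma d Hd. apply window_max_ext. intros j Hj.
    apply (replies_local _ _ _ _ _ Hxy). lia. }
  assert (Stop : stop_time n x = stop_time n y).
  { destruct (stop_time_spec n x) as [Bx Mx], (stop_time_spec n y) as [By My].
    apply (least_witness_unique _ _ _ _ Bx Mx By My).
    intros d Hd. unfold balanced. now rewrite !Same. }
  unfold approximant. rewrite <- Stop. now apply Same.
Qed.

Lemma strategies_baire_class_1 : baire_class_1 f.
Proof.
  exists approximant. split.
  - intros n. apply locally_determined_continuous. intros x.
    exists (S (n + stop_time n x)). apply approximant_local.
  - intros x. apply (balanced_window_max_lim _ (replies sm x)).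
    + exact (Hp x).
    + exact (Hm x).
    + intros n. apply stop_time_spec.
Qed.

End StrategiesToBaire.

Section BaireToStrategy.

Variables (A : Type) (T : list A -> Prop) (g : nat -> branches T -> R) (f : branches T -> R).
Hypotheses (Hg : forall n, X_continuous (g n))
           (Hlim : forall x, is_lim_seq (fun n => g n x) (f x)).

Definition settled (n : nat) (s : list A) : Prop :=
  forall k, (k < n)%nat -> forall y w : branches T,
    cylinder s y -> cylinder s w -> Rabs (g k y - g k w) <= / INR (S k).

Definition level (s : list A) : nat := largest_below (fun n => settled n s) (length s).

Definition reply (s : list A) : R :=
  epsilon (inhabits 0) (fun r => exists y, cylinder s y /\ r = g (pred (level s)) y).

Lemma settled_eventually (x : branches T) (K : nat) :
  exists L, forall t, (L <= t)%nat -> settled K (prefix (proj1_sig x) (S t)).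
Proof.
  induction K as [|K [L HL]].
  - exists O. intros t _ k Hk. lia.
  - set (d := / INR (S K) / 2).
    assert (Hd : 0 < d).
    { apply Rdiv_lt_0_compat; [apply Rinv_0_lt_compat, lt_0_INR; lia | lra]. }
    destruct (continuous_near _ (Hg K) x (mkposreal _ Hd)) as [t0 Ht0]. simpl pos in Ht0.
    exists (Nat.max L t0). intros t Ht k Hk y w Hy Hw.
    destruct (Nat.eq_dec k K) as [->|Hne]; [|apply (HL t); auto; lia].
    apply cylinder_prefix in Hy, Hw.
    pose proof (Ht0 y (prefix_shorten _ _ t0 _ Hy ltac:(lia))).
    pose proof (Ht0 w (prefix_shorten _ _ t0 _ Hw ltac:(lia))).
    replace (g K y - g K w) with ((g K y - g K x) - (g K w - g K x)) by ring.
    eapply Rle_trans; [apply Rabs_triang|]. rewrite Rabs_Ropp. unfold d in *. lra.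
Qed.

(* Along every branch the replies tend to f: the level grows without bound, and
   the reply differs from g_m(x) by at most 1/(m+1). *)
Lemma reply_lim (x : branches T) :
  is_lim_seq (fun t => reply (prefix (proj1_sig x) (S t))) (f x).
Proof.
  apply is_lim_seq_spec. intros eps.
  assert (He2 : 0 < eps / 2) by (destruct eps; simpl; lra).
  destruct (proj2 (is_lim_seq_spec _ _) (Hlim x) (mkposreal _ He2)) as [N0 HN0].
  destruct (inv_succ_eventually_lt _ He2) as [N1 HN1].
  destruct (settled_eventually x (S (N0 + N1))) as [L HL].
  exists (Nat.max L (N0 + N1)). intros t Ht.
  set (s := prefix (proj1_sig x) (S t)).
  assert (Hx : cylinder s x) by now apply cylinder_prefix.
  assert (Level : (S (N0 + N1) <= level s)%nat).
  { unfold level; apply largest_below_ge; [unfold s; rewrite prefix_length; lia | apply HL; lia]. }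
  assert (Settled : settled (level s) s)
    by (unfold level; apply largest_below_spec; intros k Hk; lia).
  destruct (epsilon_spec (inhabits 0)
              (fun r => exists y, cylinder s y /\ r = g (pred (level s)) y)
              (ex_intro _ _ (ex_intro _ x (conj Hx eq_refl))))
    as [y [Hy Ry]].
  unfold reply. rewrite Ry.
  set (m := pred (level s)).
  pose proof (Settled m ltac:(unfold m; lia) y x Hy Hx) as Close.
  pose proof (HN0 m ltac:(unfold m; lia)) as Near. simpl in Near.
  pose proof (HN1 m ltac:(unfold m; lia)) as Small.
  replace (g m y - f x) with ((g m y - g m x) + (g m x - f x)) by ring.
  eapply Rle_lt_trans; [apply Rabs_triang|]. lra.
Qed.

Lemma baire_class_1_strategies :
  II_has_ws_Gamma f /\ II_has_ws_Gamma (fun x => - f x).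
Proof.
  split.
  - exists reply. intros x. apply is_lim_LimSup_seq, reply_lim.
  - exists (fun s => - reply s). intros x.
    apply is_lim_LimSup_seq, (is_lim_seq_opp _ (Finite (f x))), reply_lim.
Qed.

End BaireToStrategy.

Theorem mainTheorem16 (A : Type) (T : list A -> Prop)
  (hAne : inhabited A) (hAc : countable_type A) (hT : pruned_tree T)
  (f : branches T -> R) :
  (II_has_ws_Gamma' f <->
     (II_has_ws_Gamma f /\ II_has_ws_Gamma (fun x => - f x))) /\
  ((II_has_ws_Gamma f /\ II_has_ws_Gamma (fun x => - f x)) <-> baire_class_1 f).
Proof.
  split; [apply gamma'_iff_gamma_pair|]. split.
  - intros [[sp Hp] [sm Hm]]. exact (strategies_baire_class_1 A T f sp sm Hp Hm).
  - intros [g [Hg Hlim]]. exact (baire_class_1_strategies A T g f Hg Hlim).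
Qed.
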